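(* Let $A$ be a real $m\times n$ matrix of rank $\rho\ge1$ with columns $A_1,\ldots,A_n$, let $\mu>0$, and let $\pi:[n]\to[n]$ be a permutation such that $A_{\pi(1)},\ldots,A_{\pi(\rho)}$ are linearly independent. For $k\in\{0,\ldots,\rho\}$ let $W_k$ be the orthogonal projection onto $\mathrm{span}\{A_{\pi(1)},\ldots,A_{\pi(k)}\}$ ($W_0=0$), $W_k^\perp=I-W_k$, and define the orthonormal vectors $Q_k=W_{k-1}^\perp(A_{\pi(k)})/\|W_{k-1}^\perp(A_{\pi(k)})\|$, $k\in[\rho]$. Suppose $s\in[\rho]$ satisfies $\|W_s^\perp(A_i)\|<\mu$ for all $i\in[n]$. Let $Q_{[s]}$ be the $m\times s$ matrix with columns $Q_1,\ldots,Q_s$ and define $F_s:\mathbb R^m\to\mathbb R^s$ by $F_s(v)=(Q_{[s]})^*v$. Then $F_s$ is an $s$-dimensional $2\mu$-distortion of the set of columns of $A$, i.e. $$\sup_{i,j\in[n]}\Big|\,\|A_i-A_j\|-\|F_s(A_i)-F_s(A_j)\|\,\Big|\le 2\mu.$$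
   Context: Norms are Euclidean; $[k]=\{1,\ldots,k\}$; $^*$ denotes transpose. *)

From HB Require Import structures.
From mathcomp Require Import all_boot all_order all_algebra all_fingroup.
From mathcomp Require Import reals.
Set Implicit Arguments. Unset Strict Implicit. Unset Printing Implicit Defensive.
Import Order.TTheory GRing.Theory Num.Theory.
Local Open Scope ring_scope.

Definition enorm (R : realType) (m : nat) (v : 'cV[R]_m) : R :=
  Num.sqrt (\sum_(i < m) v i 0 ^+ 2).

(* Row space (as a matrix whose rows are the transposed vectors) spanned by
   A_{pi(1)}, ..., A_{pi(k)}; with 0-based indices these are the columns
   pi i for i < k. *)
Definition span_first (R : realType) (m n : nat) (A : 'M[R]_(m, n))
    (pi : 'S_n) (k : nat) : 'M[R]_(n, m) :=
  \matrix_(i < n) (if (i < k)%N then (col (pi i) A)^T else 0).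

Definition is_orth_proj (R : realType) (m p : nat) (P : 'M[R]_m)
    (U : 'M[R]_(p, m)) : Prop :=
  forall v : 'cV[R]_m,
    ((P *m v)^T <= U)%MS /\
    (forall u : 'cV[R]_m, (u^T <= U)%MS -> u^T *m (v - P *m v) = 0).

(* Q_{j+1} = W_j^perp(A_{pi(j+1)}) / ||W_j^perp(A_{pi(j+1)})||  (0-based j). *)
Definition Qvec (R : realType) (m n : nat) (A : 'M[R]_(m, n)) (pi : 'S_n)
    (W : nat -> 'M[R]_m) (j : 'I_n) : 'cV[R]_m :=
  let v := (1%:M - W j) *m col (pi j) A in (enorm v)^-1 *: v.

Definition Qmat (R : realType) (m n : nat) (A : 'M[R]_(m, n)) (pi : 'S_n)
    (W : nat -> 'M[R]_m) (s : nat) (Hsn : (s <= n)%N) : 'M[R]_(m, s) :=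
  \matrix_(r < m, j < s) Qvec A pi W (widen_ord Hsn j) r 0.

From HB Require Import structures.
From mathcomp Require Import all_boot all_order all_algebra all_fingroup.
From mathcomp Require Import reals.
From mathcomp Require Import lra.
Import Order.TTheory GRing.Theory Num.Theory.
Set Implicit Arguments. Unset Strict Implicit. Unset Printing Implicit Defensive.
Local Open Scope ring_scope.

(* The Gram-Schmidt vectors Q_1, ..., Q_s are orthonormal and span the same
   space U_s as A_{pi(1)}, ..., A_{pi(s)}, so the coordinate map F_s is an
   isometry on U_s and kills its orthogonal complement.  Writing
   x = A_i - A_j = W_s x + W_s^perp x, Pythagoras gives
   ||x||^2 = ||F_s x||^2 + ||W_s^perp x||^2, whence
   | ||x|| - ||F_s x|| | <= ||W_s^perp A_i - W_s^perp A_j|| < 2 mu. *)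

Section SquaredNorm.

Variable R : realType.

Definition sqnorm m (v : 'cV[R]_m) : R := (v^T *m v) 0 0.

Lemma sqnormE m (v : 'cV[R]_m) : sqnorm v = \sum_(i < m) v i 0 ^+ 2.
Proof. by rewrite /sqnorm !mxE; apply: eq_bigr => i _; rewrite !mxE expr2. Qed.

Lemma enorm_sqnorm m (v : 'cV[R]_m) : enorm v = Num.sqrt (sqnorm v).
Proof. by rewrite sqnormE. Qed.

Lemma sqnorm_ge0 m (v : 'cV[R]_m) : 0 <= sqnorm v.
Proof. by rewrite sqnormE; apply: sumr_ge0 => i _; exact: sqr_ge0. Qed.

Lemma sqnorm_eq0 m (v : 'cV[R]_m) : (sqnorm v == 0) = (v == 0).
Proof.
apply/idP/eqP => [|->]; last by rewrite sqnormE big1 // => i _; rewrite mxE expr0n.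
rewrite sqnormE psumr_eq0 => [/allP v0|i _]; last exact: sqr_ge0.
apply/matrixP => i k; rewrite (ord1 k) mxE.
by have := v0 i (mem_index_enum _); rewrite sqrf_eq0 => /eqP.
Qed.

Lemma sqnorm_sub_le m (u v : 'cV[R]_m) :
  sqnorm (u - v) <= 2 * sqnorm u + 2 * sqnorm v.
Proof.
rewrite !sqnormE !mulr_sumr -big_split /=; apply: ler_sum => i _.
by rewrite !mxE; have := sqr_ge0 (u i 0 + v i 0); nra.
Qed.

Lemma sqnorm_sub_lt m (u v : 'cV[R]_m) c :
  enorm u < c -> enorm v < c -> sqnorm (u - v) < (2 * c) ^+ 2.
Proof.
move=> u_lt v_lt.
have sq_lt (w : 'cV[R]_m) : enorm w < c -> sqnorm w < c ^+ 2.
  rewrite enorm_sqnorm => w_lt.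
  have := sqr_sqrtr (sqnorm_ge0 w); have := sqrtr_ge0 (sqnorm w); nra.
apply: le_lt_trans (sqnorm_sub_le u v) _.
by have := sq_lt _ u_lt; have := sq_lt _ v_lt; nra.
Qed.

Lemma sqnorm_orth_proj m p (P : 'M[R]_m) (U : 'M[R]_(p, m)) (v : 'cV[R]_m) :
  is_orth_proj P U -> sqnorm v = sqnorm (P *m v) + sqnorm (v - P *m v).
Proof.
move=> /(_ v) [PvU perp]; set r := v - P *m v.
suff E : v^T *m v = (P *m v)^T *m (P *m v) + r^T *m r by rewrite /sqnorm E mxE.
have vE : v = P *m v + r by rewrite addrC subrK.
rewrite {1 2}vE mulmxDr raddfD /= !mulmxDl perp // add0r.
have rPv : r^T *m (P *m v) = 0 by rewrite -[LHS]trmxK trmx_mul trmxK perp // trmx0.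
by rewrite rPv addr0.
Qed.

(* Q^T kills v - P v, and is an isometry on the column space of Q,
   which contains P v. *)
Lemma sqnorm_coord_orth_proj m s p (Q : 'M[R]_(m, s)) (P : 'M[R]_m)
    (U : 'M[R]_(p, m)) (v : 'cV[R]_m) :
  Q^T *m Q = 1%:M -> (Q^T == U)%MS -> is_orth_proj P U ->
  sqnorm (Q^T *m v) = sqnorm (P *m v).
Proof.
move=> QQ /eqmxP QU /(_ v) [PvU perp].
have Qperp : Q^T *m (v - P *m v) = 0.
  apply/row_matrixP => k; rewrite row_mul row0 -tr_col perp //.
  by rewrite tr_col -QU row_sub.
have /submxP[D PvD] : ((P *m v)^T <= Q^T)%MS by rewrite QU.
have {}PvD : P *m v = Q *m D^T by rewrite -[LHS]trmxK PvD trmx_mul trmxK.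
have -> : Q^T *m v = Q^T *m (P *m v).
  by apply/eqP; rewrite -subr_eq0 -mulmxBr Qperp.
by rewrite PvD mulmxA QQ mul1mx /sqnorm trmx_mul -mulmxA (mulmxA Q^T) QQ mul1mx.
Qed.

End SquaredNorm.

Lemma sqrtrD_sub_le (R : rcfType) (a b : R) :
  0 <= a -> 0 <= b -> `|Num.sqrt (a + b) - Num.sqrt a| <= Num.sqrt b.
Proof.
move=> a0 b0.
have := sqr_sqrtr (addr_ge0 a0 b0); have := sqr_sqrtr a0; have := sqr_sqrtr b0.
have := sqrtr_ge0 (a + b); have := sqrtr_ge0 a; have := sqrtr_ge0 b.
set x := Num.sqrt (a + b); set y := Num.sqrt a; set z := Num.sqrt b.
move=> z0 y0 x0 zz yy xx.
have yx : y <= x by nra.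
by rewrite ger0_norm ?subr_ge0 //; nra.
Qed.

Section GramSchmidt.

Variables (R : realType) (m n : nat) (A : 'M[R]_(m, n)) (pi : 'S_n).
Variable W : nat -> 'M[R]_m.

Lemma row_span_first k i :
  row i (span_first A pi k) = if (i < k)%N then (col (pi i) A)^T else 0.
Proof. by rewrite /span_first rowK. Qed.

Lemma span_first_mono k l :
  (k <= l)%N -> (span_first A pi k <= span_first A pi l)%MS.
Proof.
move=> kl; apply/row_subP => i; rewrite row_span_first.
case: ifPn => ik; last exact: sub0mx.
by have := row_sub i (span_first A pi l); rewrite row_span_first (leq_trans ik kl).
Qed.

Lemma rank_span_first k : (k <= n)%N -> (\rank (span_first A pi k) <= k)%N.
Proof.
move=> kn; pose M := \matrix_(i < k) (col (pi (widen_ord kn i)) A)^T.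
apply: leq_trans (rank_leq_row M); apply: mxrankS; apply/row_subP => i.
rewrite row_span_first; case: ifPn => ik; last exact: sub0mx.
have -> : (col (pi i) A)^T = row (Ordinal ik) M.
  by rewrite rowK; congr (col (pi _) A)^T; apply: val_inj.
exact: row_sub.
Qed.

Lemma Qvec_sub_span_first (j : 'I_n) :
  is_orth_proj (W j) (span_first A pi j) ->
  ((Qvec A pi W j)^T <= span_first A pi j.+1)%MS.
Proof.
move=> HWj; rewrite /Qvec linearZ /=; apply: scalemx_sub.
rewrite mulmxBl mul1mx linearB /=; apply: addmx_sub.
  by have := row_sub j (span_first A pi j.+1); rewrite row_span_first ltnSn.
rewrite eqmx_opp; apply: submx_trans (span_first_mono (leqnSn j)).
exact: (HWj (col (pi j) A)).1.
Qed.

Lemma Qvec_orth_lt (j k : 'I_n) : (j < k)%N ->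
  is_orth_proj (W j) (span_first A pi j) ->
  is_orth_proj (W k) (span_first A pi k) ->
  (Qvec A pi W j)^T *m Qvec A pi W k = 0.
Proof.
move=> jk HWj HWk; rewrite {2}/Qvec -scalemxAr mulmxBl mul1mx.
rewrite (HWk (col (pi k) A)).2 ?scaler0 //.
exact: submx_trans (Qvec_sub_span_first HWj) (span_first_mono jk).
Qed.

Lemma Qvec_orth (j k : 'I_n) : j != k ->
  is_orth_proj (W j) (span_first A pi j) ->
  is_orth_proj (W k) (span_first A pi k) ->
  (Qvec A pi W j)^T *m Qvec A pi W k = 0.
Proof.
move=> jk HWj HWk; case: (ltngtP j k) => [lt_jk|lt_kj|/val_inj eq_jk].
- exact: Qvec_orth_lt.
- by rewrite -[LHS]trmxK trmx_mul trmxK Qvec_orth_lt // trmx0.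
- by rewrite eq_jk eqxx in jk.
Qed.

Lemma Qvec_unit (j : 'I_n) : (1%:M - W j) *m col (pi j) A != 0 ->
  (Qvec A pi W j)^T *m Qvec A pi W j = 1%:M.
Proof.
rewrite /Qvec; set v := _ *m col (pi j) A => v_neq0.
rewrite linearZ /= linearZ /= -scalemxAl scalerA.
have v_pos : 0 < sqnorm v by rewrite lt_def sqnorm_eq0 v_neq0 sqnorm_ge0.
apply/matrixP => a b; rewrite !ord1 [LHS]mxE [(v^T *m v) 0 0]/(sqnorm v).
by rewrite enorm_sqnorm -expr2 exprVn sqr_sqrtr ?sqnorm_ge0 // mulVf ?gt_eqF ?mxE.
Qed.

(* A zero residual would write A_{pi(j)} as a combination c of the earlier
   columns, giving the nontrivial relation c - delta_j among the rows of M. *)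
Lemma residual_neq0 r (rn : (r <= n)%N) (j : 'I_n) :
  row_free (\matrix_(i < r) (col (pi (widen_ord rn i)) A)^T) -> (j < r)%N ->
  is_orth_proj (W j) (span_first A pi j) ->
  (1%:M - W j) *m col (pi j) A != 0.
Proof.
set M := \matrix_(i < r) _ => freeM jr HWj.
apply/eqP; rewrite mulmxBl mul1mx => /eqP; rewrite subr_eq0 => /eqP Aj.
have [D AjD] : exists D, (col (pi j) A)^T = D *m span_first A pi j.
  by apply/submxP; rewrite {1}Aj; exact: (HWj (col (pi j) A)).1.
pose j' := Ordinal jr.
pose c : 'rV_r := \row_(i < r) (if (i < j)%N then D 0 (widen_ord rn i) else 0).
have cM : c *m M = (col (pi j) A)^T.
  rewrite AjD !mulmx_sum_row (bigID (fun i : 'I_n => (i < r)%N)) /=.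
  rewrite [X in _ = _ + X]big1 ?addr0 => [|i /negbTE ir]; last first.
    rewrite row_span_first; case: ifPn => [ij|_]; last by rewrite scaler0.
    by have := leq_trans ij (ltnW jr); rewrite ir.
  rewrite big_ord_narrow; apply: eq_bigr => i _.
  by rewrite rowK row_span_first mxE /=; case: ifP; rewrite ?scaler0 ?scale0r.
have : (c - delta_mx 0 j') *m M = 0 *m M.
  rewrite mul0mx mulmxBl cM -rowE rowK.
  by rewrite (_ : widen_ord rn j' = j) ?subrr //; apply: val_inj.
move/(row_free_inj freeM)/matrixP/(_ 0 j').
by rewrite !mxE /= ltnn eqxx sub0r => /eqP; rewrite oppr_eq0 oner_eq0.
Qed.

Lemma col_Qmat s (sn : (s <= n)%N) (k : 'I_s) :
  col k (Qmat A pi W sn) = Qvec A pi W (widen_ord sn k).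
Proof. by apply/matrixP => a b; rewrite !mxE (ord1 b). Qed.

Section FirstVectors.

Variables (r s : nat) (rn : (r <= n)%N) (sn : (s <= n)%N).
Hypothesis sr : (s <= r)%N.
Hypothesis freeA : row_free (\matrix_(i < r) (col (pi (widen_ord rn i)) A)^T).
Hypothesis HW : forall k, (k <= s)%N -> is_orth_proj (W k) (span_first A pi k).

Let HWk (k : 'I_s) : is_orth_proj (W (widen_ord sn k)) (span_first A pi k).
Proof. by apply: HW; exact: ltnW (ltn_ord k). Qed.

Lemma Qmat_orthonormal : (Qmat A pi W sn)^T *m Qmat A pi W sn = 1%:M.
Proof.
apply/matrixP => a b.
transitivity (((Qvec A pi W (widen_ord sn a))^T *m Qvec A pi W (widen_ord sn b)) 0 0).
  by rewrite !mxE; apply: eq_bigr => k _; rewrite !mxE.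
have [<-|ab] := eqVneq a b.
  rewrite Qvec_unit ?mxE ?eqxx //.
  apply: (residual_neq0 freeA) (HWk a); exact: leq_trans (ltn_ord a) sr.
by rewrite Qvec_orth ?mxE ?(negbTE ab).
Qed.

Lemma Qmat_span : ((Qmat A pi W sn)^T == span_first A pi s)%MS.
Proof.
have QU : ((Qmat A pi W sn)^T <= span_first A pi s)%MS.
  apply/row_subP => k; rewrite -tr_col col_Qmat.
  exact: submx_trans (Qvec_sub_span_first (HWk k)) (span_first_mono (ltn_ord k)).
have rankQ : \rank (Qmat A pi W sn)^T = s.
  by apply/eqP/row_freeP; exists (Qmat A pi W sn); exact: Qmat_orthonormal.
have [le_rank eq_rank] := mxrank_leqif_sup QU.
by rewrite QU -eq_rank eqn_leq le_rank rankQ rank_span_first.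
Qed.

End FirstVectors.

End GramSchmidt.

Theorem proposition1 (R : realType) (m n : nat) (A : 'M[R]_(m, n)) (mu : R)
  (pi : 'S_n)
  (Hrho : (0 < \rank A)%N)
  (Hmu : 0 < mu)
  (Hind : row_free (\matrix_(i < \rank A)
                      (col (pi (widen_ord (rank_leq_col A) i)) A)^T))
  (W : nat -> 'M[R]_m)
  (HW : forall k : nat, (k <= \rank A)%N -> is_orth_proj (W k) (span_first A pi k))
  (s : nat) (Hs1 : (0 < s)%N) (Hs : (s <= \rank A)%N)
  (Hsmall : forall i : 'I_n, enorm ((1%:M - W s) *m col i A) < mu) :
  let Q := Qmat A pi W (leq_trans Hs (rank_leq_col A)) in
  let F := fun v : 'cV[R]_m => Q^T *m v in
  forall i j : 'I_n,
    `| enorm (col i A - col j A) - enorm (F (col i A) - F (col j A)) | <= 2 * mu.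
Proof.
move=> Q F i j; set x := col i A - col j A.
have HWs := HW s Hs.
have HWle k (ks : (k <= s)%N) := HW k (leq_trans ks Hs).
have QQ : Q^T *m Q = 1%:M := Qmat_orthonormal _ Hs Hind HWle.
have QU : (Q^T == span_first A pi s)%MS := Qmat_span _ Hs Hind HWle.
have -> : F (col i A) - F (col j A) = Q^T *m x by rewrite /F -mulmxBr.
rewrite !enorm_sqnorm (sqnorm_orth_proj x HWs) (sqnorm_coord_orth_proj x QQ QU HWs).
apply: le_trans (sqrtrD_sub_le (sqnorm_ge0 _) (sqnorm_ge0 _)) _.
have -> : x - W s *m x = (1%:M - W s) *m col i A - (1%:M - W s) *m col j A.
  by rewrite -mulmxBr mulmxBl mul1mx.
have mu2_ge0 : 0 <= 2 * mu by rewrite mulr_ge0 // ltW.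
rewrite -[2 * mu]ger0_norm // -sqrtr_sqr ler_sqrt ?sqr_ge0 //.
exact/ltW/(sqnorm_sub_lt (Hsmall i) (Hsmall j)).
Qed.
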